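(* For every integer $k>1$, the automorphism group $\mathrm{Aut}(\mathcal F_k)$ of the graph $\mathcal F_k$ is uncountable.
   Context: The vertex set $V$ consists of all reduced fractions $p/q$ with $p,q\in\mathbb Z$, $\gcd(p,q)=1$, together with $1/0$; here $p/q$ and $(-p)/(-q)$ denote the same vertex. For vertices define $d(p/q,a/b)=|pb-qa|$. The graph $\mathcal F_k$ has vertex set $V$, with an edge between $p/q$ and $a/b$ exactly when $d(p/q,a/b)=k$. $\mathrm{Aut}$ denotes the group of graph automorphisms. *)

From HB Require Import structures.
From mathcomp Require Import all_boot all_order all_algebra.
Set Implicit Arguments. Unset Strict Implicit. Unset Printing Implicit Defensive.
Import Order.TTheory GRing.Theory Num.Theory.

(* A vertex p/q is represented by its normalized coprime pair (p, q):
   gcd(p,q) = 1 and either q > 0, or q = 0 and p = 1 (the vertex 1/0).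
   This picks exactly one representative of each class {(p,q), (-p,-q)}. *)
Definition vertex_pred (x : int * int) : bool :=
  coprimez x.1 x.2 && ((0 < x.2)%R || ((x.2 == 0%R) && (x.1 == 1%R))).

Definition vertex : Type := {x : int * int | vertex_pred x}.

Definition fdist (x y : vertex) : nat :=
  absz ((val x).1 * (val y).2 - (val x).2 * (val y).1)%R.

Definition Fk_adj (k : nat) (x y : vertex) : Prop := fdist x y = k.

Definition is_Fk_aut (k : nat) (f : vertex -> vertex) : Prop :=
  bijective f /\ forall x y : vertex, Fk_adj k x y <-> Fk_adj k (f x) (f y).

(* The proof exhibits 2^aleph_0 automorphisms. For n : nat let D_n be the set of
   vertices p/q with q > 0, k | p and 0 < |p/q - kn| < 1. The reflection
   x |-> 2kn - x is an automorphism of F_k that fixes kn/1 and preserves D_n,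
   and every F_k-neighbour of a vertex of D_n lies in D_n or is kn/1: writing
   p = kp', a neighbour a/b has k | a = ka', and p'/q - n, a'/b - n are Farey
   neighbours. As the D_n are pairwise disjoint, reflecting any chosen subfamily
   of blocks and fixing all other vertices is again an automorphism, and a
   diagonal argument over the choices defeats every enumeration. *)

From mathcomp Require Import all_boot all_order all_algebra zify ring.
From Stdlib Require Import ClassicalEpsilon.
Set Implicit Arguments. Unset Strict Implicit.
Import Order.TTheory GRing.Theory Num.Theory.

Local Open Scope ring_scope.

Section Patching.

Variables (T : eqType) (adj : T -> T -> Prop) (D : nat -> pred T) (r : nat -> T -> T).

Hypothesis adj_sym : forall x y, adj x y -> adj y x.
Hypothesis D_disjoint : forall i j x, D i x -> D j x -> i = j.
Hypothesis r_adj : forall i x y, adj (r i x) (r i y) <-> adj x y.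
Hypothesis rK : forall i, involutive (r i).
Hypothesis r_stable : forall i x, D i x -> D i (r i x).
Hypothesis r_fix_boundary : forall i x y, D i x -> ~~ D i y -> adj x y -> r i y = y.

Definition block_index (x : T) : nat := epsilon (inhabits 0%N) (fun i => D i x).

Lemma block_indexP i x : D i x -> block_index x = i.
Proof. by move=> Dx; apply: D_disjoint (epsilon_spec _ (D^~ x) (ex_intro _ i Dx)) Dx. Qed.

Definition patch (c : nat -> bool) (x : T) : T :=
  let i := block_index x in if D i x && c i then r i x else x.

Variant patch_spec (c : nat -> bool) (x : T) : T -> Type :=
  | PatchMoved i of D i x & c i : patch_spec c x (r i x)
  | PatchFixed of (forall i, D i x -> ~~ c i) : patch_spec c x x.

Lemma patchP c x : patch_spec c x (patch c x).
Proof.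
rewrite /patch; case: ifP => [/andP[Dx ci] | not_moved]; first exact: PatchMoved.
by apply: PatchFixed => i Dx; move: not_moved; rewrite (block_indexP Dx) Dx /= => ->.
Qed.

Lemma patchE c i x : D i x -> patch c x = if c i then r i x else x.
Proof. by move=> Dx; rewrite /patch (block_indexP Dx) Dx. Qed.

Lemma adj_r_notin i x y : D i x -> ~~ D i y -> adj (r i x) y <-> adj x y.
Proof.
move=> Dx Dy; split => [adj_rx | adj_x].
- by rewrite -(r_adj i) (r_fix_boundary (r_stable Dx) Dy adj_rx).
- by rewrite -(r_fix_boundary Dx Dy adj_x) r_adj.
Qed.

Lemma adj_notin_r i x y : D i x -> ~~ D i y -> adj y (r i x) <-> adj y x.
Proof. by move=> Dx Dy; split=> /adj_sym/(adj_r_notin Dx Dy)/adj_sym. Qed.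

Lemma patch_adj c x y : adj (patch c x) (patch c y) <-> adj x y.
Proof.
have notD i j z : D j z -> i != j -> ~~ D i z.
  by move=> Dz; apply: contraNN => Dz'; rewrite (D_disjoint Dz' Dz).
case: patchP => [i Dx ci | x_fixed]; case: patchP => [j Dy cj | y_fixed] //.
- have [<- | ij] := eqVneq i j; first exact: r_adj.
  rewrite (adj_r_notin Dx (notD _ _ _ (r_stable Dy) ij)).
  by apply: (adj_notin_r Dy (notD _ _ _ Dx _)); rewrite eq_sym.
- by apply: adj_r_notin Dx _; apply/negP => /y_fixed; rewrite ci.
- by apply: adj_notin_r Dy _; apply/negP => /x_fixed; rewrite cj.
Qed.

Lemma patchK c : involutive (patch c).
Proof.
move=> x; case: (patchP c x) => [i Dx ci | x_fixed].
  by rewrite (patchE _ (r_stable Dx)) ci rK.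
by case: patchP => // i /x_fixed/negP.
Qed.

Lemma patch_diagonal (z : nat -> T) (g : nat -> T -> T) :
  (forall i, D i (z i)) -> (forall i, r i (z i) <> z i) ->
  exists c, forall i, ~ g i =1 patch c.
Proof.
move=> Dz rz; exists (fun i => g i (z i) == z i) => i /(_ (z i)).
by rewrite (patchE _ (Dz i)) /=; case: eqP => [-> /esym /rz | ].
Qed.

End Patching.

Lemma coprimez_common_dvd (d m n : int) :
  coprimez m n -> (d %| m)%Z -> (d %| n)%Z -> `|d|%N = 1%N.
Proof.
move=> cop dm dn; apply/eqP; rewrite -dvdz1.
by have := dvdz_gcd d m n; rewrite dm dn (eqP cop).
Qed.

Lemma farey_neighbour_bound (k P q A b : int) :
  0 < k -> 0 < k * `|P| < q -> `|P * b - q * A| = 1 -> 0 < b -> k * `|A| <= b.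
Proof.
move=> k_gt0 /andP[P_gt0 P_lt] det b_gt0.
have : `|q * A| - `|P * b| <= 1 by rewrite -det distrC lerB_dist.
rewrite !normrM (gtr0_norm b_gt0) (gtr0_norm (lt_trans P_gt0 P_lt)).
move: P_gt0 P_lt; move: `|A| `|P| => a p P_gt0 P_lt det_le.
rewrite leNgt; apply/negP => ka_gt.
have p_ge1 : 1 <= p by nia.
(* k >= k (q a - p b) >= q (b + 1) - (q - 1) b = q + b > q > k p >= k *)
have : q * (b + 1) <= q * (k * a) by rewrite ler_pM2l; lia.
have : b * (k * p) <= b * (q - 1) by rewrite ler_pM2l; lia.
have : k * (q * a - p * b) <= k * 1 by rewrite ler_pM2l.
nia.
Qed.

Lemma fdist_sym x y : fdist x y = fdist y x.
Proof. by rewrite /fdist -abszN; congr absz; ring. Qed.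

Section Blocks.

Variable k : nat.

Definition in_block (n : nat) (x : vertex) : bool :=
  [&& 0 < (val x).2, (k%:Z %| (val x).1)%Z &
      0 < `|(val x).1 - k%:Z * n%:Z * (val x).2| < (val x).2].

Lemma centre_pred n : vertex_pred (k%:Z * n%:Z, 1).
Proof. by rewrite /vertex_pred /= coprimezE coprimen1. Qed.

Definition centre n : vertex := exist vertex_pred _ (centre_pred n).

Definition mirror_val n (x : int * int) : int * int :=
  if x.2 == 0 then x else (2 * k%:Z * n%:Z * x.2 - x.1, x.2).

Lemma mirror_pred n x : vertex_pred x -> vertex_pred (mirror_val n x).
Proof.
case: x => p q; rewrite /mirror_val /=; case: eqP => // /eqP q_neq0.
rewrite /vertex_pred /= (negbTE q_neq0) orbF => /andP[cop_pq ->]; rewrite andbT.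
have /coprimezP[[u v] /= uv1] := cop_pq.
by apply/coprimezP; exists (- u, v + 2 * k%:Z * n%:Z * u) => /=; rewrite -uv1; ring.
Qed.

Definition mirror n (x : vertex) : vertex := exist vertex_pred _ (mirror_pred n (valP x)).

Lemma fdist_mirror n x y : fdist (mirror n x) (mirror n y) = fdist x y.
Proof.
case: x y => [[p q] x_pred] [[a b] y_pred]; rewrite /fdist /mirror /mirror_val /=.
case: eqP => [->|_]; case: eqP => [->|_] //=;
  by [congr absz; ring | rewrite -abszN; congr absz; ring].
Qed.

Lemma mirrorK n : involutive (mirror n).
Proof.
case=> [[p q] x_pred]; apply: val_inj; rewrite /mirror /mirror_val /=.
by case: (q =P 0) => [-> //| /eqP/negbTE -> /=]; congr pair; ring.
Qed.

Lemma mirror_centre n : mirror n (centre n) = centre n.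
Proof. by apply: val_inj; rewrite /mirror /mirror_val /=; congr pair; ring. Qed.

Lemma mirror_block n x : in_block n x -> in_block n (mirror n x).
Proof.
case: x => [[p q] x_pred]; rewrite /in_block /mirror /mirror_val /=.
case/and4P=> q_gt0 k_dvd_p P_gt0 P_lt; rewrite gt_eqF //= q_gt0.
have k_dvd_2knq : (k%:Z %| 2 * k%:Z * n%:Z * q)%Z.
  exact/dvdz_mulr/dvdz_mulr/dvdz_mull/dvdzz.
rewrite rpredB //=.
have -> : 2 * k%:Z * n%:Z * q - p - k%:Z * n%:Z * q = - (p - k%:Z * n%:Z * q) by ring.
by rewrite normrN P_gt0 P_lt.
Qed.

Lemma block_point_pred n : vertex_pred (k%:Z * n%:Z * (k%:Z + 1) + k%:Z, k%:Z + 1).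
Proof.
apply/andP; split; last by apply/orP; left => /=; lia.
by apply/coprimezP; exists (-1, k%:Z * n%:Z + 1) => /=; ring.
Qed.

Definition block_point n : vertex := exist vertex_pred _ (block_point_pred n).

Lemma Fk_adj_dvd_numer (x y : vertex) :
  (k%:Z %| (val x).1)%Z -> Fk_adj k x y -> (k%:Z %| (val y).1)%Z.
Proof.
case: x => [[p q] x_pred]; case: y => [[a b] y_pred].
have [cop_pq _] := andP x_pred.
rewrite /Fk_adj /fdist /= => k_dvd_p adj.
have cop_kq : coprimez k%:Z q := coprimez_dvdl k_dvd_p cop_pq.
rewrite -(Gauss_dvdzr _ cop_kq).
have -> : q * a = p * b - (p * b - q * a) by ring.
by rewrite rpredB ?dvdz_mulr // dvdzE adj.
Qed.

Hypothesis k_gt1 : (1 < k)%N.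

Lemma in_block_uniq m n x : in_block m x -> in_block n x -> m = n.
Proof.
case: x => [[p q] x_pred]; rewrite /in_block /=.
case/and4P=> q_gt0 _ _ m_lt /and4P[_ _ _ n_lt].
have : `|k%:Z * (m%:Z - n%:Z)| * q < 2 * q.
  rewrite -(gtr0_norm q_gt0) -normrM.
  have -> : k%:Z * (m%:Z - n%:Z) * q = (p - k%:Z * n%:Z * q) - (p - k%:Z * m%:Z * q) by ring.
  lia.
rewrite ltr_pM2r // normrM; nia.
Qed.

Lemma dvd_numer_denom_gt0 (y : vertex) : (k%:Z %| (val y).1)%Z -> 0 < (val y).2.
Proof.
case: y => [[a b] /andP[_ /orP[//| /andP[_ /eqP /= a1]]]].
by rewrite /= a1 dvdz1 /=; case: k k_gt1 => [|[|]].
Qed.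

Lemma neighbour_near_centre (n : nat) (p' q a' b : int) :
  coprimez (a' * k%:Z) b -> 0 < b -> 0 < k%:Z * `|p' - n%:Z * q| < q ->
  `|p' * b - q * a'| = 1 ->
  (a' = n%:Z /\ b = 1) \/ 0 < k%:Z * `|a' - n%:Z * b| < b.
Proof.
move=> cop_ab b_gt0 P_bound det.
set P := p' - n%:Z * q in P_bound; set A := a' - n%:Z * b.
have {}det : `|P * b - q * A| = 1 by rewrite -det /P /A; congr Num.norm; ring.
have [A0 | A_neq0] := eqVneq A 0.
  have b1 : b = 1.
    move: det; rewrite A0 mulr0 subr0 => det.
    have : P = 0 \/ 1 <= P \/ P <= -1 by lia.
    by case=> [|[]] ?; nia.
  by left; split=> //; move: A0; rewrite /A b1; lia.
have k_gt0 : 0 < k%:Z by lia.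
right; rewrite mulr_gt0 ?normr_gt0 //=.
have := farey_neighbour_bound k_gt0 P_bound det b_gt0.
rewrite le_eqVlt => /orP[/eqP kA_b | //]; exfalso.
have k_dvd_b : (k%:Z %| b)%Z by rewrite -kA_b dvdz_mulr.
have /= k1 := coprimez_common_dvd cop_ab (dvdz_mull a' (dvdzz k)) k_dvd_b.
by move: k_gt1; rewrite k1.
Qed.

Lemma block_neighbour n x y :
  in_block n x -> Fk_adj k x y -> in_block n y \/ y = centre n.
Proof.
move=> x_in adj; have /and4P[_ k_dvd_p _ _] := x_in.
have k_dvd_a := Fk_adj_dvd_numer k_dvd_p adj.
have b_gt0 := dvd_numer_denom_gt0 k_dvd_a.
move: x_in adj k_dvd_p k_dvd_a b_gt0.
case: x => [[p q] x_pred]; case: y => [[a b] y_pred].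
have [/= cop_ab _] := andP y_pred.
rewrite /in_block /Fk_adj /fdist /= => /and3P[_ _ P_bound] adj.
move=> /dvdzP[p' p_eq] /dvdzP[a' a_eq] b_gt0.
move: cop_ab P_bound adj; subst p a.
have -> : p' * k%:Z - k%:Z * n%:Z * q = k%:Z * (p' - n%:Z * q) by ring.
have -> : a' * k%:Z - k%:Z * n%:Z * b = k%:Z * (a' - n%:Z * b) by ring.
have -> : p' * k%:Z * b - q * (a' * k%:Z) = k%:Z * (p' * b - q * a') by ring.
have k_gt0 : 0 < k%:Z by lia.
rewrite abszM !normrM (gtr0_norm k_gt0) b_gt0 dvdz_mull //= => cop_ab P_bound adj.
have {}adj : `|p' * b - q * a'| = 1 by nia.
have [[a'_n b1] | y_in] := neighbour_near_centre cop_ab b_gt0 P_bound adj; last by left.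
by right; apply: val_inj => /=; rewrite a'_n b1 mulrC.
Qed.

Lemma mirror_fix_boundary n x y :
  in_block n x -> ~~ in_block n y -> Fk_adj k x y -> mirror n y = y.
Proof.
move=> x_in y_out /(block_neighbour x_in) [y_in | ->]; last exact: mirror_centre.
by rewrite y_in in y_out.
Qed.

Lemma block_point_in n : in_block n (block_point n).
Proof.
rewrite /in_block /=.
have -> : k%:Z * n%:Z * (k%:Z + 1) + k%:Z - k%:Z * n%:Z * (k%:Z + 1) = k%:Z by ring.
rewrite rpredD ?dvdz_mulr ?dvdzz //=; lia.
Qed.

Lemma mirror_block_point n : mirror n (block_point n) <> block_point n.
Proof.
move/(congr1 (fun v : vertex => (val v).1)); rewrite /mirror /mirror_val /=.
by rewrite gt_eqF /=; lia.
Qed.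

End Blocks.

Local Close Scope ring_scope.

Lemma patch_mirror_aut k c :
  1 < k -> is_Fk_aut k (patch (in_block k) (mirror k) c).
Proof.
move=> k_gt1; split.
  by apply/inv_bij/patchK; [exact: in_block_uniq k_gt1 | exact: mirrorK | exact: mirror_block].
move=> x y; apply: iff_sym; apply: patch_adj.
- by move=> {}x {}y; rewrite /Fk_adj fdist_sym.
- exact: in_block_uniq k_gt1.
- by move=> n {}x {}y; rewrite /Fk_adj fdist_mirror.
- exact: mirror_block.
- exact: mirror_fix_boundary k_gt1.
Qed.

Theorem corollary1p2 (k : nat) (hk : 1 < k) :
  ~ (exists g : nat -> (vertex -> vertex),
       forall f : vertex -> vertex, is_Fk_aut k f -> exists n : nat, g n =1 f).
Proof.
case=> g g_onto.
have [c not_g] :=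
  patch_diagonal (in_block_uniq hk) g (block_point_in hk) (mirror_block_point hk).
have [n gn] := g_onto _ (patch_mirror_aut c hk).
exact: not_g gn.
Qed.
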